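(* Let $\mathbb{F}$ be an algebraically closed field with $\mathrm{char}\,\mathbb{F}=2$, let $\mathbb{M}\subseteq\mathbf{O}$ be the quaternion subalgebra, and let $\mathrm{Stab}_{{\rm G}_2}(\mathbb{M})=\{g\in{\rm G}_2\mid g\mathbb{M}\subseteq\mathbb{M}\}$. Then: 1. For every $a\in\mathbb{M}$ with $\mathrm{tr}(a)=1$ and $n(a)=0$ there exists $g\in\mathrm{Stab}_{{\rm G}_2}(\mathbb{M})$ with $ga=e_1$. 2. For every $a\in\mathbb{M}$ with $\mathrm{tr}(a)=0$ and $n(a)=1$ there exists $g\in\mathrm{Stab}_{{\rm G}_2}(\mathbb{M})$ with $ga\in\{1_{\mathbf{O}},1_{\mathbf{O}}+\mathbf{u}_1\}$. 3. For every non-zero $\gamma\in\mathbb{F}$ there exists $\xi_\gamma\in\mathrm{Stab}_{{\rm G}_2}(\mathbb{M})$ such that for all $\alpha_1,\ldots,\alpha_4\in\mathbb{F}$, $\xi_\gamma\begin{pmatrix}\alpha_1&(\alpha_2,0,0)\\(\alpha_3,0,0)&\alpha_4\end{pmatrix}=\begin{pmatrix}\alpha_1&(\gamma\alpha_2,0,0)\\(\gamma^{-1}\alpha_3,0,0)&\alpha_4\end{pmatrix}$. 4. If $b_1,b_2\in\mathbb{M}$ satisfy $\mathrm{tr}(b_1)=\mathrm{tr}(e_1)$, $\mathrm{tr}(b_2)=\mathrm{tr}(e_2)$, $n(b_1)=n(e_1)$, $n(b_2)=n(e_2)$ and $\mathrm{tr}(b_1b_2)=\mathrm{tr}(e_1e_2)$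 (i.e. $(e_1,e_2)$ and $(b_1,b_2)$ are not separated by $S_2^{(2)}$), then there exists $g\in\mathrm{Stab}_{{\rm G}_2}(\mathbb{M})$ with $gb_1=e_1$ and $gb_2\in\{e_2,e_2+\mathbf{u}_1,e_2+\mathbf{v}_1\}$. 5. If $b\in\mathbb{M}$ satisfies $\mathrm{tr}(b)=n(b)=\mathrm{tr}(e_1b)=0$, then $b\in\mathbb{F}\mathbf{u}_1$ or $b\in\mathbb{F}\mathbf{v}_1$.
   Context: The split octonion algebra $\mathbf{O}$ is the 8-dimensional $\mathbb{F}$-vector space of formal matrices $a=\begin{pmatrix}\alpha&\mathbf{u}\\ \mathbf{v}&\beta\end{pmatrix}$ with $\alpha,\beta\in\mathbb{F}$, $\mathbf{u},\mathbf{v}\in\mathbb{F}^3$, with multiplication $\begin{pmatrix}\alpha&\mathbf{u}\\ \mathbf{v}&\beta\end{pmatrix}\begin{pmatrix}\alpha'&\mathbf{u}'\\ \mathbf{v}'&\beta'\end{pmatrix}=\begin{pmatrix}\alpha\alpha'+\mathbf{u}\cdot\mathbf{v}'&\alpha\mathbf{u}'+\beta'\mathbf{u}-\mathbf{v}\times\mathbf{v}'\\ \alpha'\mathbf{v}+\beta\mathbf{v}'+\mathbf{u}\times\mathbf{u}'&\beta\beta'+\mathbf{v}\cdot\mathbf{u}'\end{pmatrix}$ (dot product and cross product on $\mathbb{F}^3$). Trace $\mathrm{tr}(a)=\alpha+\beta$, norm $n(a)=\alpha\beta-\mathbf{u}\cdot\mathbf{v}$. With $\mathbf{c}_1$ the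 first standard basis vector of $\mathbb{F}^3$: $e_1$ has $\alpha=1$ and all else $0$, $e_2$ has $\beta=1$ and all else $0$, $\mathbf{u}_1$ has $\mathbf{u}=\mathbf{c}_1$ and all else $0$, $\mathbf{v}_1$ has $\mathbf{v}=\mathbf{c}_1$ and all else $0$, $1_{\mathbf{O}}=e_1+e_2$. The quaternion subalgebra is $\mathbb{M}=\left\{\begin{pmatrix}\alpha&(\gamma,0,0)\\(\delta,0,0)&\beta\end{pmatrix}\mid\alpha,\beta,\gamma,\delta\in\mathbb{F}\right\}$ (isomorphic to $M_2(\mathbb{F})$). ${\rm G}_2=\mathrm{Aut}(\mathbf{O})$. *)

From HB Require Import structures.
From mathcomp Require Import all_boot all_order all_algebra all_field.
Set Implicit Arguments. Unset Strict Implicit. Unset Printing Implicit Defensive.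
Import GRing.Theory.
Local Open Scope ring_scope.

(* Split octonions over a field F, as formal 2x2 "Zorn vector matrices". *)
Section Oct.
Variable F : fieldType.

Record vec3 := V3 { c1 : F; c2 : F; c3 : F }.

Definition vzero : vec3 := V3 0 0 0.
Definition vadd (x y : vec3) := V3 (c1 x + c1 y) (c2 x + c2 y) (c3 x + c3 y).
Definition vscale (k : F) (x : vec3) := V3 (k * c1 x) (k * c2 x) (k * c3 x).
Definition vopp (x : vec3) := V3 (- c1 x) (- c2 x) (- c3 x).
Definition dot (x y : vec3) : F := c1 x * c1 y + c2 x * c2 y + c3 x * c3 y.
Definition cross (x y : vec3) : vec3 :=
  V3 (c2 x * c3 y - c3 x * c2 y) (c3 x * c1 y - c1 x * c3 y) (c1 x * c2 y - c2 x * c1 y).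

(* [oa, ou; ov, ob] *)
Record oct := Oct { oa : F; ou : vec3; ov : vec3; ob : F }.

Definition oadd (x y : oct) :=
  Oct (oa x + oa y) (vadd (ou x) (ou y)) (vadd (ov x) (ov y)) (ob x + ob y).
Definition oscale (k : F) (x : oct) :=
  Oct (k * oa x) (vscale k (ou x)) (vscale k (ov x)) (k * ob x).

Definition omul (x y : oct) : oct :=
  Oct (oa x * oa y + dot (ou x) (ov y))
      (vadd (vadd (vscale (oa x) (ou y)) (vscale (ob y) (ou x))) (vopp (cross (ov x) (ov y))))
      (vadd (vadd (vscale (oa y) (ov x)) (vscale (ob x) (ov y))) (cross (ou x) (ou y)))
      (ob x * ob y + dot (ov x) (ou y)).

Definition otr (x : oct) : F := oa x + ob x.
Definition onorm (x : oct) : F := oa x * ob x - dot (ou x) (ov x).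

Definition cvec1 : vec3 := V3 1 0 0.
Definition e1 : oct := Oct 1 vzero vzero 0.
Definition e2 : oct := Oct 0 vzero vzero 1.
Definition u1 : oct := Oct 0 cvec1 vzero 0.
Definition v1 : oct := Oct 0 vzero cvec1 0.
Definition one_O : oct := oadd e1 e2.

Definition mkM (a b g d : F) : oct := Oct a (V3 g 0 0) (V3 d 0 0) b.
Definition inM (x : oct) : Prop := exists a b g d, x = mkM a b g d.

Definition is_G2 (g : oct -> oct) : Prop :=
  [/\ (forall x y, g (oadd x y) = oadd (g x) (g y)),
      (forall k x, g (oscale k x) = oscale k (g x)),
      (forall x y, g (omul x y) = omul (g x) (g y)) &
      bijective g].

Definition in_StabM (g : oct -> oct) : Prop :=
  is_G2 g /\ (forall x, inM x -> inM (g x)).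

End Oct.

(* Every octonion satisfies x^2 = tr(x) x - n(x) 1, and the coefficients of this relation
   are determined by x unless x is a scalar; hence automorphisms preserve trace and norm.
   Inside Stab(M) we use automorphisms acting on M = M_2(F) as conjugations by torus,
   unipotent and Weyl elements. They move a trace-1 norm-0 element (an idempotent of rank
   one) to e1 and, in characteristic 2, a trace-0 norm-1 element (1 plus a square-zero
   matrix) to 1 or 1 + u1. For a pair (b1, b2), once b1 is moved to e1 the invariants force
   b2 to become e2 + g u1 + d v1 with g d = 0, which the torus normalises. *)

From mathcomp Require Import all_boot all_order all_algebra all_field.
From mathcomp Require Import ring.
Import GRing.Theory.
Local Open Scope ring_scope.

Section SplitOctonions.
Context {F : fieldType}.
Implicit Types (x y : oct F) (a b g d t : F).

Lemma Oct_congr (a a' b b' p1 p2 p3 q1 q2 q3 p1' p2' p3' q1' q2' q3' : F) :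
  a = a' -> p1 = p1' -> p2 = p2' -> p3 = p3' -> q1 = q1' -> q2 = q2' -> q3 = q3' ->
  b = b' -> Oct a (V3 p1 p2 p3) (V3 q1 q2 q3) b = Oct a' (V3 p1' p2' p3') (V3 q1' q2' q3') b'.
Proof. by move=> -> -> -> -> -> -> -> ->. Qed.

Ltac oct_coords := repeat match goal with
  | x : oct F |- _ => case: x => ? [? ? ?] [? ? ?] ?
  end; rewrite /omul /oadd /oscale /dot /cross /vadd /vscale /vopp /=; apply: Oct_congr.

Lemma omul_1l x : omul (one_O F) x = x.
Proof. by rewrite /one_O; oct_coords; ring. Qed.

Lemma omul_1r x : omul x (one_O F) = x.
Proof. by rewrite /one_O; oct_coords; ring. Qed.

Lemma omul_self x :
  omul x x = oadd (oscale (otr x) x) (oscale (- onorm x) (one_O F)).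
Proof. by rewrite /one_O /otr /onorm; oct_coords; ring. Qed.

Lemma quadratic_relation_coeffs x t n :
  omul x x = oadd (oscale t x) (oscale (- n) (one_O F)) ->
  (t = otr x /\ n = onorm x) \/ x = oscale (oa x) (one_O F).
Proof.
rewrite omul_self.
case: x => a [p1 p2 p3] [q1 q2 q3] b.
rewrite /otr /onorm /oadd /oscale /one_O /e1 /e2 /vadd /vscale /vzero /dot /=.
case=> Ea Ep1 Ep2 Ep3 Eq1 Eq2 Eq3 Eb.
have eq_of_diff (y z l r : F) : l = r -> y - z = l - r -> y = z.
  by move=> ->; rewrite subrr => /subr0_eq.
have [Et | t_ne] := eqVneq t (a + b).
  by left; split=> //; apply: (eq_of_diff _ _ _ _ Ea); rewrite Et; ring.
(* Otherwise (tr x - t) x is a multiple of 1, which pins every coordinate of x. *)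
have coord0 (c l r : F) : l = r -> (a + b - t) * c = l - r -> c = 0.
  move=> ->; rewrite subrr => /eqP; rewrite mulf_eq0 subr_eq0 eq_sym (negbTE t_ne).
  by move/eqP.
have Eab := congr2 (fun l r => l - r) Ea Eb.
have /subr0_eq b_a : a - b = 0 by apply: (coord0 _ _ _ Eab); ring.
have -> : p1 = 0 by apply: (coord0 _ _ _ Ep1); ring.
have -> : p2 = 0 by apply: (coord0 _ _ _ Ep2); ring.
have -> : p3 = 0 by apply: (coord0 _ _ _ Ep3); ring.
have -> : q1 = 0 by apply: (coord0 _ _ _ Eq1); ring.
have -> : q2 = 0 by apply: (coord0 _ _ _ Eq2); ring.
have -> : q3 = 0 by apply: (coord0 _ _ _ Eq3); ring.
by right; rewrite -b_a; apply: Oct_congr; ring.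
Qed.

Lemma G2_one {h : oct F -> oct F} : is_G2 h -> h (one_O F) = one_O F.
Proof.
move=> [_ _ hM [k _ hK]].
by have := hM (one_O F) (k (one_O F)); rewrite omul_1l hK omul_1r.
Qed.

Lemma G2_otr_onorm {h : oct F -> oct F} x :
  is_G2 h -> otr (h x) = otr x /\ onorm (h x) = onorm x.
Proof.
move=> hG; have h1 := G2_one hG; case: hG => hD hZ hM hbij.
have := congr1 h (omul_self x); rewrite hM hD !hZ h1.
case/quadratic_relation_coeffs => [[<- <-] // | hx_scalar].
suff hx : h x = x by rewrite hx.
by apply: (bij_inj hbij); rewrite [in LHS]hx_scalar hZ h1 -hx_scalar.
Qed.

(* Identifying M with M_2(F) through [mkM a b g d <-> [[a, g], [d, b]]], these act on M
   by conjugation with diag(c, 1), [[1, t], [0, 1]] and [[0, 1], [-1, 0]] respectively. *)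
Definition oct_torus c x :=
  Oct (oa x) (V3 (c * c1 (ou x)) (c^-1 * c2 (ou x)) (c3 (ou x)))
      (V3 (c^-1 * c1 (ov x)) (c * c2 (ov x)) (c3 (ov x))) (ob x).

Definition oct_unipotent t x :=
  Oct (oa x + t * c1 (ov x))
      (V3 (c1 (ou x) - t * oa x + t * ob x - t ^+ 2 * c1 (ov x)) (c2 (ou x)) (c3 (ou x)))
      (V3 (c1 (ov x)) (c2 (ov x) + t * c3 (ou x)) (c3 (ov x) - t * c2 (ou x)))
      (ob x - t * c1 (ov x)).

Definition oct_flip x := Oct (ob x) (vopp (ov x)) (vopp (ou x)) (oa x).

Lemma torus_mkM c a b g d : oct_torus c (mkM a b g d) = mkM a b (c * g) (c^-1 * d).
Proof. by rewrite /oct_torus /mkM /=; apply: Oct_congr; ring. Qed.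

Lemma unipotent_mkM t a b g d :
  oct_unipotent t (mkM a b g d) =
  mkM (a + t * d) (b - t * d) (g - t * a + t * b - t ^+ 2 * d) d.
Proof. by rewrite /oct_unipotent /mkM /=; apply: Oct_congr; ring. Qed.

Lemma flip_mkM a b g d : oct_flip (mkM a b g d) = mkM b a (- d) (- g).
Proof. by rewrite /oct_flip /mkM /vopp /=; apply: Oct_congr; ring. Qed.

Lemma otr_e1_mkM a b g d : otr (omul (e1 F) (mkM a b g d)) = a.
Proof. by rewrite /otr /omul /dot /=; ring. Qed.

Lemma onorm_mkM a b g d : onorm (mkM a b g d) = a * b - g * d.
Proof. by rewrite /onorm /dot /=; ring. Qed.

Lemma in_StabM_comp (f h : oct F -> oct F) :
  in_StabM f -> in_StabM h -> in_StabM (f \o h).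
Proof.
move=> [[fD fZ fM fbij] fS] [[hD hZ hM hbij] hS]; split; last by move=> x /hS /fS.
split=> [x y|k x|x y|] /=; [by rewrite hD fD | by rewrite hZ fZ | by rewrite hM fM |].
exact: bij_comp.
Qed.

Lemma in_StabM_id : in_StabM (@id (oct F)).
Proof. by split=> //; split=> //; exists id. Qed.

Lemma in_StabM_torus c : c != 0 -> in_StabM (oct_torus c).
Proof.
move=> c0; split=> [|_ [a [b [g [d ->]]]]]; last by rewrite torus_mkM; do 4 eexists.
split=> [x y|k x|x y|]; try by rewrite /oct_torus; oct_coords; field.
by exists (oct_torus c^-1) => x; rewrite /oct_torus; oct_coords; rewrite ?invrK; field.
Qed.

Lemma in_StabM_unipotent t : in_StabM (oct_unipotent t).
Proof.
split=> [|_ [a [b [g [d ->]]]]]; last by rewrite unipotent_mkM; do 4 eexists.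
split=> [x y|k x|x y|]; try by rewrite /oct_unipotent; oct_coords; ring.
by exists (oct_unipotent (- t)) => x; rewrite /oct_unipotent; oct_coords; ring.
Qed.

Lemma in_StabM_flip : in_StabM oct_flip.
Proof.
split=> [|_ [a [b [g [d ->]]]]]; last by rewrite flip_mkM; do 4 eexists.
split=> [x y|k x|x y|]; try by rewrite /oct_flip; oct_coords; ring.
by exists oct_flip => x; rewrite /oct_flip; oct_coords; ring.
Qed.

Definition stab_reach x y := exists h, in_StabM h /\ h x = y.

Lemma stab_reach_refl x : stab_reach x x.
Proof. by exists id; split; first exact: in_StabM_id. Qed.

Lemma stab_reach_trans y x z : stab_reach x y -> stab_reach y z -> stab_reach x z.
Proof.
move=> [h [hS <-]] [k [kS <-]].
by exists (k \o h); split; first exact: in_StabM_comp.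
Qed.

Lemma reach_torus c a b g d g' d' : c != 0 -> g' = c * g -> d' = c^-1 * d ->
  stab_reach (mkM a b g d) (mkM a b g' d').
Proof.
by move=> c0 -> ->; exists (oct_torus c); split; [exact: in_StabM_torus | exact: torus_mkM].
Qed.

Lemma reach_unipotent t a b g d a' b' g' :
  a' = a + t * d -> b' = b - t * d -> g' = g - t * a + t * b - t ^+ 2 * d ->
  stab_reach (mkM a b g d) (mkM a' b' g' d).
Proof.
move=> -> -> ->; exists (oct_unipotent t).
by split; [exact: in_StabM_unipotent | exact: unipotent_mkM].
Qed.

Lemma reach_flip a b g d g' d' : g' = - d -> d' = - g ->
  stab_reach (mkM a b g d) (mkM b a g' d').
Proof.
by move=> -> ->; exists oct_flip; split; [exact: in_StabM_flip | exact: flip_mkM].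
Qed.

Lemma idempotent_reach_e1 x : inM x -> otr x = 1 -> onorm x = 0 -> stab_reach x (e1 F).
Proof.
move=> [a [b [g [d ->]]]]; rewrite /otr onorm_mkM /= => tr1.
have -> : b = 1 - a by rewrite -tr1; ring.
move=> n0.
have upper c : stab_reach (mkM 1 0 c 0) (e1 F) by apply: (reach_unipotent c); ring.
have lower c : stab_reach (mkM 0 1 0 c) (e1 F).
  apply: (stab_reach_trans (mkM 1 0 (- c) 0)); last exact: upper.
  by apply: reach_flip; ring.
have [d0 | d_ne0] := eqVneq d 0.
  subst d; have /eqP : a * (1 - a) = 0 by rewrite -n0; ring.
  rewrite mulf_eq0 subr_eq0 => /orP[/eqP-> | /eqP<-]; last by rewrite subrr; exact: upper.
  apply: (stab_reach_trans (mkM 0 1 0 0)); last exact: lower.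
  by apply: (reach_unipotent (- g)); ring.
have -> : g = a * (1 - a) / d.
  by apply: (mulIf d_ne0); rewrite divfK // -[RHS]subr0 -n0; ring.
apply: (stab_reach_trans (mkM 0 1 0 d)); last exact: lower.
by apply: (reach_unipotent (- a / d)); field.
Qed.

Lemma e1_orthogonal_null {a b g d : F} :
  otr (omul (e1 F) (mkM a b g d)) = 0 -> onorm (mkM a b g d) = 0 ->
  a = 0 /\ (g = 0 \/ d = 0).
Proof.
rewrite otr_e1_mkM onorm_mkM => -> /eqP.
by rewrite mul0r sub0r oppr_eq0 mulf_eq0 => /orP[] /eqP; auto.
Qed.

Lemma reach_e2_normal_form {g d : F} : g = 0 \/ d = 0 ->
  exists k, in_StabM k /\ k (e1 F) = e1 F /\
    (k (mkM 0 1 g d) = e2 F \/ k (mkM 0 1 g d) = oadd (e2 F) (u1 F) \/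
     k (mkM 0 1 g d) = oadd (e2 F) (v1 F)).
Proof.
have -> : oadd (e2 F) (u1 F) = mkM 0 1 1 0.
  by rewrite /oadd /vadd /=; apply: Oct_congr; ring.
have -> : oadd (e2 F) (v1 F) = mkM 0 1 0 1.
  by rewrite /oadd /vadd /=; apply: Oct_congr; ring.
have torus_e1 c : oct_torus c (e1 F) = e1 F.
  by rewrite /oct_torus /=; apply: Oct_congr; ring.
move=> gd; have [-> | g_ne0] := eqVneq g 0.
  have [-> | d_ne0] := eqVneq d 0.
    by exists id; split; [exact: in_StabM_id | split; last left].
  exists (oct_torus d); split; first exact: in_StabM_torus.
  by split; first exact: torus_e1; right; right; rewrite torus_mkM mulVf // mulr0.
have d0 : d = 0 by case: gd => // g0; move/eqP: g_ne0.
exists (oct_torus g^-1); split; first by apply: in_StabM_torus; rewrite invr_eq0.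
by split; first exact: torus_e1; right; left; rewrite torus_mkM d0 invrK mulVf // mulr0.
Qed.

Lemma separated_pair_reach (b1 b2 : oct F) : inM b1 -> inM b2 ->
  otr b1 = otr (e1 F) -> otr b2 = otr (e2 F) ->
  onorm b1 = onorm (e1 F) -> onorm b2 = onorm (e2 F) ->
  otr (omul b1 b2) = otr (omul (e1 F) (e2 F)) ->
  exists h, in_StabM h /\ h b1 = e1 F /\
    (h b2 = e2 F \/ h b2 = oadd (e2 F) (u1 F) \/ h b2 = oadd (e2 F) (v1 F)).
Proof.
move=> Mb1 Mb2 tr1 tr2 n1 n2 tr12.
have [h [hS hb1]] : stab_reach b1 (e1 F).
  by apply: idempotent_reach_e1; rewrite ?tr1 ?n1 // /otr /onorm /dot /=; ring.
have [[_ _ hM _] hMM] := hS.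
have [x [y [g [d hb2]]]] := hMM b2 Mb2.
have [trh nh] := G2_otr_onorm b2 hS.1.
have [tr12h _] := G2_otr_onorm (omul b1 b2) hS.1.
rewrite hM hb1 hb2 tr12 (otr_e1_mkM 0 1 0 0) in tr12h.
rewrite hb2 n2 (onorm_mkM 0 1 0 0) !mul0r subrr in nh.
have [x0 gd] := e1_orthogonal_null tr12h nh.
rewrite hb2 tr2 x0 /otr /= !add0r in trh.
have [k [kS [ke1 kb2]]] := reach_e2_normal_form gd.
exists (k \o h); split; first exact: in_StabM_comp.
by rewrite /= hb1 hb2 x0 trh.
Qed.

Lemma nilpotent_orthogonal_e1 x : inM x -> otr x = 0 -> onorm x = 0 ->
  otr (omul (e1 F) x) = 0 ->
  (exists c, x = oscale c (u1 F)) \/ (exists c, x = oscale c (v1 F)).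
Proof.
move=> [a [b [g [d ->]]]] tr0 n0 /e1_orthogonal_null /(_ n0) [a0 gd].
move: tr0; rewrite a0 /otr /= add0r => ->.
by case: gd => ->; [right; exists d | left; exists g];
  rewrite /oscale /vscale /=; apply: Oct_congr; ring.
Qed.

Section Char2.
Hypothesis char2 : 2 \in [pchar F].

Lemma char2_eq (r p q : F) : p - q = 2 * r -> p = q.
Proof. by rewrite (pcharf0 char2) mul0r => /subr0_eq. Qed.

Lemma trace0_unit_reach x : inM x -> otr x = 0 -> onorm x = 1 ->
  stab_reach x (one_O F) \/ stab_reach x (oadd (one_O F) (u1 F)).
Proof.
have -> : one_O F = mkM 1 1 0 0.
  by rewrite /one_O /oadd /vadd /=; apply: Oct_congr; ring.
have -> : oadd (mkM 1 1 0 0) (u1 F) = mkM 1 1 1 0.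
  by rewrite /oadd /vadd /=; apply: Oct_congr; ring.
have upper c :
    stab_reach (mkM 1 1 c 0) (mkM 1 1 0 0) \/ stab_reach (mkM 1 1 c 0) (mkM 1 1 1 0).
  have [-> | c_ne0] := eqVneq c 0; first by left; exact: stab_reach_refl.
  by right; apply: (reach_torus c^-1); rewrite ?invr_eq0 ?mulVf ?mulr0.
move=> [a [b [g [d ->]]]]; rewrite /otr onorm_mkM /= => tr0.
have -> : b = a by rewrite -[a](oppr_pchar2 char2); apply/eqP; rewrite -addr_eq0 addrC tr0.
move=> n1.
have [d0 | d_ne0] := eqVneq d 0.
  subst d; suff -> : a = 1 by exact: upper.
  have /eqP : (a - 1) ^+ 2 = 0 by apply: (char2_eq (1 - a)); ring: n1.
  by rewrite expf_eq0 /= subr_eq0 => /eqP.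
have -> : g = (a * a - 1) / d.
  by apply: (mulIf d_ne0); rewrite divfK // -n1; ring.
suff to_upper : stab_reach (mkM a a ((a * a - 1) / d) d) (mkM 1 1 (- d) 0).
  by case: (upper (- d)) => reach; [left | right]; exact: stab_reach_trans to_upper reach.
apply: (stab_reach_trans (mkM 1 1 0 d)); last by apply: reach_flip; ring.
apply: (reach_unipotent ((1 - a) / d)); first by field.
  by apply: (char2_eq (1 - a)); field.
by apply: (char2_eq ((1 - a) / d)); field.
Qed.
End Char2.
End SplitOctonions.

Theorem lemma7p5 (F : closedFieldType) (char2 : (2 \in [pchar F])%N) :
  (* 1 *)
  (forall a : oct F, inM a -> otr a = 1 -> onorm a = 0 ->
     exists g, in_StabM g /\ g a = e1 F) /\
  (* 2 *)
  (forall a : oct F, inM a -> otr a = 0 -> onorm a = 1 ->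
     exists g, in_StabM g /\ (g a = one_O F \/ g a = oadd (one_O F) (u1 F))) /\
  (* 3 *)
  (forall gam : F, gam != 0 ->
     exists xi, in_StabM xi /\
       forall a1 a2 a3 a4 : F,
         xi (mkM a1 a4 a2 a3) = mkM a1 a4 (gam * a2) (gam^-1 * a3)) /\
  (* 4 *)
  (forall b1 b2 : oct F, inM b1 -> inM b2 ->
     otr b1 = otr (e1 F) -> otr b2 = otr (e2 F) ->
     onorm b1 = onorm (e1 F) -> onorm b2 = onorm (e2 F) ->
     otr (omul b1 b2) = otr (omul (e1 F) (e2 F)) ->
     exists g, in_StabM g /\ g b1 = e1 F /\
       (g b2 = e2 F \/ g b2 = oadd (e2 F) (u1 F) \/ g b2 = oadd (e2 F) (v1 F))) /\
  (* 5 *)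
  (forall b : oct F, inM b -> otr b = 0 -> onorm b = 0 -> otr (omul (e1 F) b) = 0 ->
     (exists c : F, b = oscale c (u1 F)) \/ (exists c : F, b = oscale c (v1 F))).
Proof.
split; first exact: idempotent_reach_e1.
split.
  move=> a Ma tr0 n1.
  by case: (trace0_unit_reach char2 a Ma tr0 n1) => -[h [hS ha]]; exists h; auto.
split.
  move=> gam gam_ne0; exists (oct_torus gam).
  by split; [exact: in_StabM_torus | move=> *; exact: torus_mkM].
split; [exact: separated_pair_reach | exact: nilpotent_orthogonal_e1].
Qed.
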